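(* Let $q\ge 1$ and $t\ge 0$ be integers. A code $\mathcal{C}\subseteq\mathcal{S}_{\mathrm{all}}^q$ is a $t$-tail-deletion-detecting code if and only if it is a $t$-tail-insertion-detecting code. Moreover, for every integer $q\ge 3$ and every integer $t\ge 1$ there exists a code $\mathcal{C}\subseteq\mathcal{S}_{\mathrm{all}}^q$ that is a $t$-tail-deletion-detecting code but is not a $2$-tail-indel-detecting code.
   Context: Let $[q]=\{0,1,\dots,q-1\}$. For $1\le m\le q$, a partial permutation of length $m$ over $[q]$ is a sequence $\pi=(\pi_1,\dots,\pi_m)$ of $m$ pairwise distinct elements of $[q]$; write $|\pi|=m$. Let $\mathcal{S}_m^q$ be the set of all partial permutations of length $m$ and $\mathcal{S}_{\mathrm{all}}^q=\bigcup_{m=1}^{q}\mathcal{S}_m^q$. A code is any subset of $\mathcal{S}_{\mathrm{all}}^q$. Juxtaposition $\omega\pi$ denotes concatenation with $\omega$ on the left. Tail deletions: for $\pi$ of length $m$ and an integer $j\ge 0$, let $\pi_{\downarrow j}=(\pi_{k+1},\dots,\pi_m)$ with $k=\min(j,m-1)$ (leftmost symbols are deleted; the last symbol is never deleted). For an integer $t\ge 0$, $\mathcal{B}_{\mathrm{del}}^t(\pi)=\{\pi_{\downarrow j}:0\le j\le t\}$. Tail insertions: $\mathcal{B}_{\mathrm{ins}}^t(\pi)$ is the set of all $\omega\pi\in\mathcal{S}_{\mathrm{all}}^q$ where $\omega$ is a (possibly empty) sequence of at most $t$ elements of $[q]$ (so all entries of $\omega\pi$ are pairwise distinct). Tail indels: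 $\mathcal{B}_{\mathrm{indel}}^t(\pi)$ is the set of all partial permutations obtainable from $\pi$ by a sequence of at most $t$ operations, each being either a single tail deletion (removing the first symbol of a partial permutation of length at least $2$) or a single tail insertion (prepending an element of $[q]$ not already occurring). For $X\in\{\mathrm{del},\mathrm{ins},\mathrm{indel}\}$, a code $\mathcal{C}$ is $t$-tail-$X$-detecting (i.e. $t$-tail-deletion-, insertion-, indel-detecting) if $\mathcal{C}\cap\mathcal{B}_X^t(\pi)=\{\pi\}$ for every $\pi\in\mathcal{C}$. *)

(* Partial permutations over [q] = {0,...,q-1} are lists of nats. *)
From mathcomp Require Import all_boot.
Set Implicit Arguments. Unset Strict Implicit. Unset Printing Implicit Defensive.

Definition is_pperm (q : nat) (s : seq nat) : bool :=
  [&& 0 < size s, size s <= q, uniq s & all (fun x => x < q) s].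

Definition is_code (q : nat) (C : seq nat -> Prop) : Prop :=
  forall s, C s -> is_pperm q s.

Definition tail_del (j : nat) (s : seq nat) : seq nat :=
  drop (minn j (size s).-1) s.

Definition B_del (t : nat) (s : seq nat) : seq nat -> Prop :=
  fun u => exists j, j <= t /\ u = tail_del j s.

Definition B_ins (q t : nat) (s : seq nat) : seq nat -> Prop :=
  fun u => exists w : seq nat, size w <= t /\ u = w ++ s /\ is_pperm q u.

Definition indel_step (q : nat) (s u : seq nat) : Prop :=
  (1 < size s /\ u = behead s) \/
  (exists a, a < q /\ a \notin s /\ u = a :: s).

Fixpoint indel_steps (q n : nat) (s u : seq nat) : Prop :=
  match n with
  | 0 => u = s
  | n'.+1 => exists v, indel_step q s v /\ indel_steps q n' v u
  end.

Definition B_indel (q t : nat) (s : seq nat) : seq nat -> Prop :=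
  fun u => exists n, n <= t /\ indel_steps q n s u.

Definition detecting (C : seq nat -> Prop) (B : seq nat -> seq nat -> Prop) : Prop :=
  forall p, C p -> forall u, (C u /\ B p u) <-> u = p.

Definition del_detecting (t : nat) (C : seq nat -> Prop) := detecting C (B_del t).
Definition ins_detecting (q t : nat) (C : seq nat -> Prop) := detecting C (B_ins q t).
Definition indel_detecting (q t : nat) (C : seq nat -> Prop) := detecting C (B_indel q t).

(* Tail insertion is the converse of tail deletion: within a code of nonempty
   words, u arises from p by at most t tail insertions exactly when p arises from
   u by at most t tail deletions, and a code is detecting for a relation iff it is
   for its converse.  Indels are strictly stronger: deleting the head of 1 0 and
   inserting 2 reaches 2 0, while the code {1 0, 2 0} of words of a common length
   detects any number of tail deletions. *)
From mathcomp Require Import all_boot.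

Set Implicit Arguments.
Unset Strict Implicit.
Unset Printing Implicit Defensive.

Lemma tail_del0 (s : seq nat) : tail_del 0 s = s.
Proof. by rewrite /tail_del min0n drop0. Qed.

Lemma tail_del_cat (w s : seq nat) : 0 < size s -> tail_del (size w) (w ++ s) = s.
Proof.
move=> s_gt0; rewrite /tail_del size_cat.
have -> : minn (size w) (size w + size s).-1 = size w.
  by apply/minn_idPl; rewrite -subn1 -addnBA // leq_addr.
by rewrite drop_size_cat.
Qed.

Lemma drop_size_id (k : nat) (s : seq nat) : size (drop k s) = size s -> drop k s = s.
Proof.
rewrite size_drop; case: k => [|k]; first by rewrite drop0.
case: s => [|x s] //=; rewrite subSS => eq_size.
by have := leq_subr k (size s); rewrite eq_size ltnn.
Qed.

Lemma B_ins_B_del (q t : nat) (p u : seq nat) :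
  is_pperm q u -> 0 < size p -> B_ins q t p u <-> B_del t u p.
Proof.
move=> u_pperm p_gt0; split.
  by move=> [w [w_le [-> _]]]; exists (size w); rewrite tail_del_cat.
move=> [j [j_le ->]]; exists (take (minn j (size u).-1) u).
rewrite /tail_del cat_take_drop size_take_min; split=> //.
by rewrite (leq_trans (geq_minl _ _)) ?(leq_trans (geq_minl _ _)).
Qed.

Lemma detecting_converse (C : seq nat -> Prop) (B B' : seq nat -> seq nat -> Prop) :
  (forall p u, C p -> C u -> B p u <-> B' u p) -> detecting C B -> detecting C B'.
Proof.
move=> BB' detB p Cp u; split; last first.
  by move=> ->; split=> //; apply/(BB' p p Cp Cp); case: ((detB p Cp p).2 erefl).
by move=> [Cu /BB' B'up]; apply/esym/(detB u Cu p); split; last exact: B'up.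
Qed.

Lemma code_size_gt0 (q : nat) (C : seq nat -> Prop) (s : seq nat) :
  is_code q C -> C s -> 0 < size s.
Proof. by move=> codeC /codeC /and4P[]. Qed.

Lemma del_detecting_ins_detecting (q t : nat) (C : seq nat -> Prop) :
  is_code q C -> del_detecting t C <-> ins_detecting q t C.
Proof.
move=> codeC; have sz := code_size_gt0 codeC.
split; apply: detecting_converse => p u Cp Cu.
  by apply: iff_sym; apply: B_ins_B_del; [exact: codeC | exact: sz].
by apply: B_ins_B_del; [exact: codeC | exact: sz].
Qed.

Lemma del_detecting_uniform_size (t : nat) (C : seq nat -> Prop) :
  (forall s u, C s -> C u -> size s = size u) -> del_detecting t C.
Proof.
move=> uniform p Cp u; split; last by move=> ->; split=> //; exists 0; rewrite tail_del0.
by move=> [Cu [j [_ eq_u]]]; move: (uniform _ _ Cu Cp); rewrite eq_u; apply: drop_size_id.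
Qed.

Lemma B_indel_swap_head (q : nat) (a b : nat) (s : seq nat) :
  0 < size s -> b < q -> b \notin s -> B_indel q 2 (a :: s) (b :: s).
Proof.
move=> s_gt0 b_lt b_notin; exists 2; split=> //.
exists s; split; first by left.
by exists (b :: s); split=> //; right; exists b.
Qed.

Theorem mainTheorem1 :
  (forall (q t : nat) (C : seq nat -> Prop), 1 <= q -> is_code q C ->
     (del_detecting t C <-> ins_detecting q t C)) /\
  (forall (q t : nat), 3 <= q -> 1 <= t ->
     exists C : seq nat -> Prop,
       is_code q C /\ del_detecting t C /\ ~ indel_detecting q 2 C).
Proof.
split=> [q t C _|q t q_ge3 _]; first exact: del_detecting_ins_detecting.
exists (fun s => s = [:: 1; 0] \/ s = [:: 2; 0]); split; last split.
- have q_gt1 : 1 < q := ltnW q_ge3; have q_gt0 : 0 < q := ltnW q_gt1.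
  by move=> s [->|->]; rewrite /is_pperm /= q_gt0 q_gt1 ?q_ge3.
- by apply: del_detecting_uniform_size => s u [->|->] [->|->].
- move=> /(_ [:: 1; 0] (or_introl erefl) [:: 2; 0]) [swap _].
  have [] // : [:: 2; 0] = [:: 1; 0].
  by apply: swap; split; [right | exact: B_indel_swap_head].
Qed.
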